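(* Let $I=\{1,2\}$, $A=\{x,y\}$ with $x\ne y$, let $\mathcal C=\mathcal C(I,A,(\rho_i)_{i\in I},(C^a)_{a\in A})$ be a Cartan scheme with $\rho_1(x)=\rho_2(x)=y$ and $\rho_1(y)=\rho_2(y)=x$, and let $\mathcal R=\mathcal R(\mathcal C,(R^a)_{a\in A})$ be a root system of type $\mathcal C$. Then $\mathcal R$ is finite if and only if $\mathcal R$ is standard and $C^x=C^y$ is of finite type, that is, $c^x_{12}=c^x_{21}=0$ or $c^x_{12}c^x_{21}\in\{1,2,3\}$.
   Context: Let $\{\alpha_i\mid i\in I\}$ be the standard basis of $\mathbb Z^I$; $\mathbb N_0=\{0,1,2,\dots\}$. A generalized Cartan matrix is $C=(c_{ij})_{i,j\in I}\in\mathbb Z^{I\times I}$ with $c_{ii}=2$, $c_{jk}\le0$ for $j\ne k$, and $c_{ij}=0\Rightarrow c_{ji}=0$. A Cartan scheme $\mathcal C=\mathcal C(I,A,(\rho_i)_{i\in I},(C^a)_{a\in A})$ consists of a nonempty set $A$, maps $\rho_i:A\to A$ and generalized Cartan matrices $C^a=(c^a_{jk})_{j,k\in I}$ such that (C1) $\rho_i^2=\mathrm{id}$ and (C2) $c^a_{ij}=c^{\rho_i(a)}_{ij}$ for all $a\in A$, $i,j\in I$. It (and any root system of its type) is called standard if $C^a=C^b$ for all $a,b\in A$. For $i\in I$, $a\in A$ let $\sigma_i^a\in\mathrm{Aut}(\mathbb Z^I)$, $\sigma_i^a(\alpha_j)=\alpha_j-c^a_{ij}\alpha_i$. A root system of type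 $\mathcal C$ is a family $\mathcal R=\mathcal R(\mathcal C,(R^a)_{a\in A})$ of subsets $R^a\subset\mathbb Z^I$ such that, writing $R^a_+=R^a\cap\mathbb N_0^I$ and $m^a_{i,j}=|R^a\cap(\mathbb N_0\alpha_i+\mathbb N_0\alpha_j)|$, for all $a\in A$, $i,j\in I$: (R1) $R^a=R^a_+\cup(-R^a_+)$; (R2) $R^a\cap\mathbb Z\alpha_i=\{\alpha_i,-\alpha_i\}$; (R3) $\sigma_i^a(R^a)=R^{\rho_i(a)}$; (R4) if $i\neq j$ and $m^a_{i,j}$ is finite then $(\rho_i\rho_j)^{m^a_{i,j}}(a)=a$. It is finite if every $R^a$ is finite. *)

From mathcomp Require Import all_boot all_order all_algebra.
Set Implicit Arguments. Unset Strict Implicit. Unset Printing Implicit Defensive.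
Import GRing.Theory Num.Theory.
Local Open Scope ring_scope.

(* Z^I is modelled as {ffun I -> int}; alpha i is the standard basis vector. *)
Definition alpha (I : finType) (i : I) : {ffun I -> int} := [ffun j => (i == j)%:Z].

Definition gcm (I : finType) (c : I -> I -> int) : Prop :=
  (forall i, c i i = 2) /\
  (forall j k, j != k -> c j k <= 0) /\
  (forall i j, c i j = 0 -> c j i = 0).

(* Cartan scheme C(I, A, (rho_i), (C^a)) ; C a i j = c^a_{ij} *)
Definition cartan_scheme (I : finType) (A : Type) (rho : I -> A -> A)
  (C : A -> I -> I -> int) : Prop :=
  (forall a, gcm (C a)) /\
  (forall i a, rho i (rho i a) = a) /\
  (forall a i j, C a i j = C (rho i a) i j).

Definition standard (I : finType) (A : Type) (C : A -> I -> I -> int) : Prop :=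
  forall a b, C a = C b.

(* sigma_i^a, the linear map with alpha_j |-> alpha_j - c^a_{ij} alpha_i *)
Definition sigma (I : finType) (A : Type) (C : A -> I -> I -> int) (i : I) (a : A)
  (v : {ffun I -> int}) : {ffun I -> int} :=
  v - alpha i *~ (\sum_(j : I) C a i j * v j).

Definition nonneg (I : finType) (v : {ffun I -> int}) : Prop := forall k, 0 <= v k.

Definition has_card (T : eqType) (S : T -> Prop) (m : nat) : Prop :=
  exists s : seq T, uniq s /\ size s = m /\ (forall v, S v <-> v \in s).

Definition finite_set (T : eqType) (S : T -> Prop) : Prop :=
  exists s : seq T, forall v, S v <-> v \in s.

Definition in_cone (I : finType) (i j : I) (v : {ffun I -> int}) : Prop :=
  exists m n : nat, v = alpha i *+ m + alpha j *+ n.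

Definition root_system (I : finType) (A : Type) (rho : I -> A -> A)
  (C : A -> I -> I -> int) (R : A -> {ffun I -> int} -> Prop) : Prop :=
  (forall a v, R a v <-> ((R a v /\ nonneg v) \/ (R a (- v) /\ nonneg (- v)))) /\
  (forall a i v, (R a v /\ exists z : int, v = alpha i *~ z)
                 <-> (v = alpha i \/ v = - alpha i)) /\
  (forall a i w, R (rho i a) w <-> exists v, R a v /\ sigma C i a v = w) /\
  (forall a i j (m : nat), i != j ->
     has_card (fun v => R a v /\ in_cone i j v) m ->
     iter m (fun b => rho i (rho j b)) a = a).

Definition finite_rs (I : finType) (A : Type) (R : A -> {ffun I -> int} -> Prop) : Prop :=
  forall a, finite_set (R a).

From mathcomp Require Import all_boot all_order all_algebra zify ring boolp.
Import Order.TTheory GRing.Theory Num.Theory.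
Set Implicit Arguments. Unset Strict Implicit. Unset Printing Implicit Defensive.
Local Open Scope ring_scope.

(* Both rho_i swap x and y while preserving row i of the Cartan matrix, so the
   scheme is standard; write a = c_12, b = c_21.  So sigma_i^a = sigma_i does
   not depend on a, and sigma_i maps roots of a to roots of rho_i(a); moreover
   every root is sign-coherent and the only roots on an axis are +-alpha_i.
   If ab <= 3, i.e. we are in type A1xA1, A2, B2 or G2, six alternating
   reflections push every vector out of the open quadrants; since a root can
   leave them only by landing on an axis, every root is the image of some
   +-alpha_i under a word of length at most 6, and each R^a is finite.
   If ab >= 4, the Coxeter element sigma_2 sigma_1 strictly increases the
   second coordinate along the orbit of alpha_2, which yields infinitely many
   roots in R^x. *)

Section RootSystem.
Variables (I : finType) (A : Type) (rho : I -> A -> A) (C : A -> I -> I -> int)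
  (R : A -> {ffun I -> int} -> Prop).
Hypothesis HR : root_system rho C R.

Lemma root_sign_coherent a v : R a v -> nonneg v \/ nonneg (- v).
Proof. by case: HR => R1 _ /R1; tauto. Qed.

Lemma root_on_axis a i v z : R a v -> v = alpha i *~ z -> v = alpha i \/ v = - alpha i.
Proof. by case: HR => _ [R2 _] Rv vE; apply/(R2 a i v).1; split; last exists z. Qed.

Lemma root_simple a i : R a (alpha i).
Proof. by case: HR => _ [R2 _]; have [] := (R2 a i (alpha i)).2 (or_introl erefl). Qed.

Lemma root_sigma a i v : R a v -> R (rho i a) (sigma C i a v).
Proof. by case: HR => _ [_ [R3 _]] Rv; apply/R3; exists v. Qed.

End RootSystem.

Lemma sigma_involutive (I : finType) (A : Type) (C : A -> I -> I -> int) i a :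
  C a i i = 2 -> involutive (sigma C i a).
Proof.
move=> Cii v; rewrite /sigma; set t := \sum_j _ * v j.
have -> : \sum_j C a i j * (v - alpha i *~ t) j = - t.
  rewrite (eq_bigr (fun j => C a i j * v j - C a i j * (alpha i *~ t) j)); last first.
    by move=> j _; rewrite !ffunE mulrBr.
  rewrite sumrB -/t (bigD1 i) //= big1 => [|j /negPf ji]; last first.
    by rewrite ffunMzE ffunE eq_sym ji mul0rz mulr0.
  by rewrite ffunMzE ffunE eqxx Cii addr0 mulrzz mul1r; ring.
by rewrite mulrNz opprK subrK.
Qed.

Lemma exists_ub_seq (T : eqType) (R : realDomainType) (f : T -> R) (s : seq T) :
  exists B, forall u, u \in s -> f u <= B.
Proof.
exists (\sum_(w <- s) `|f w|) => u us.
by rewrite (big_rem u us) /= (le_trans (ler_norm _)) // lerDl sumr_ge0.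
Qed.

Fixpoint walk (T : Type) (s : bool -> T -> T) (k : nat) (v : T) : T :=
  if k is k'.+1 then s (~~ odd k') (walk s k' v) else v.

Fixpoint unwalk (T : Type) (s : bool -> T -> T) (k : nat) (w : T) : T :=
  if k is k'.+1 then unwalk s k' (s (~~ odd k') w) else w.

Section Walk.
Variables (T : Type) (s : bool -> T -> T).

Lemma walkK k : (forall b, involutive (s b)) -> cancel (walk s k) (unwalk s k).
Proof. by move=> sK; elim: k => //= k IH v; rewrite sK IH. Qed.

Lemma unwalkK k : (forall b, involutive (s b)) -> cancel (unwalk s k) (walk s k).
Proof. by move=> sK; elim: k => //= k IH w; rewrite IH sK. Qed.

Lemma walk_morph (U : Type) (s' : bool -> U -> U) (f : T -> U) k v :
  (forall b v, f (s b v) = s' b (f v)) -> f (walk s k v) = walk s' k (f v).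
Proof. by move=> fs; elim: k => //= k <-. Qed.

End Walk.

(* sigma_1 ([first = true]) and sigma_2 in the coordinates of alpha_1, alpha_2,
   for the Cartan matrix with c_12 = a and c_21 = b. *)
Definition refl2 (a b : int) (first : bool) (p : int * int) : int * int :=
  if first then (- p.1 - a * p.2, p.2) else (p.1, - p.2 - b * p.1).

Definition in_open_quadrant (p : int * int) : Prop :=
  (0 < p.1 /\ 0 < p.2) \/ (p.1 < 0 /\ p.2 < 0).

(* 7 = 1 + the Coxeter number 6 of G_2. *)
Lemma refl2_walk_exits_open_quadrant (a b : int) p :
  a <= 0 -> b <= 0 -> (a = 0 <-> b = 0) -> a * b <= 3 ->
  ~ (forall k, (k < 7)%N -> in_open_quadrant (walk (refl2 a b) k p)).
Proof.
case: p => m n a_le0 b_le0 ab0 le3 inQ.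
move: (inQ 0%N isT) (inQ 1%N isT) (inQ 2%N isT) (inQ 3%N isT) (inQ 4%N isT)
  (inQ 5%N isT) (inQ 6%N isT).
have a_cases : a = 0 \/ a = -1 \/ a = -2 \/ a = -3 by nia.
have b_cases : b = 0 \/ b = -1 \/ b = -2 \/ b = -3 by nia.
rewrite /in_open_quadrant /=.
move: ab0 le3; case: a_cases => [->|[->|[->|->]]]; case: b_cases => [->|[->|[->|->]]]; lia.
Qed.

Lemma refl2_coxeter_grows (a b : int) (p : int * int) :
  a < 0 -> b < 0 -> 4 <= a * b -> 0 <= p.1 -> 2 * p.1 < - a * p.2 ->
  let q := refl2 a b false (refl2 a b true p) in
  0 <= q.1 /\ 2 * q.1 < - a * q.2 /\ p.2 < q.2.
Proof.
case: p => m n /= a_lt0 b_lt0 ab_ge4 m_ge0 inv.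
set m' := - m - a * n; set n' := - n - b * m'.
have n_gt0 : 0 < n by nia.
have m_lt : m < m' by rewrite /m'; lia.
have n_lt : n < n' by rewrite /n' /m'; nia.
have inv' : 2 * m' < - a * n' by rewrite /n'; nia.
lia.
Qed.

Lemma refl2_walk_unbounded (a b : int) j :
  a < 0 -> b < 0 -> 4 <= a * b -> j%:Z < (walk (refl2 a b) j.*2 (0, 1)).2.
Proof.
move=> a_lt0 b_lt0 ab_ge4.
suff : let p := walk (refl2 a b) j.*2 (0, 1) in
  0 <= p.1 /\ 2 * p.1 < - a * p.2 /\ j%:Z < p.2 by case=> _ [].
elim: j => [|j]; first by rewrite /=; lia.
rewrite doubleS /= odd_double /=; set p := walk _ _ _ => -[p1 [inv lt]].
have := refl2_coxeter_grows a_lt0 b_lt0 ab_ge4 p1 inv; rewrite /=; lia.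
Qed.

Definition coords (v : {ffun 'I_2 -> int}) : int * int := (v ord0, v ord_max).

Lemma ord2P (j : 'I_2) : j = ord0 \/ j = ord_max.
Proof. by case: j => [[|[|//]] ?]; [left|right]; apply: val_inj. Qed.

Lemma coords_inj : injective coords.
Proof. by move=> v w [v0 v1]; apply/ffunP => j; case: (ord2P j) => ->. Qed.

Lemma coords_alpha0_mulz z : coords (alpha ord0 *~ z) = (z, 0).
Proof. by rewrite /coords !ffunMzE !ffunE /= intz mul0rz. Qed.

Lemma coords_alpha1_mulz z : coords (alpha ord_max *~ z) = (0, z).
Proof. by rewrite /coords !ffunMzE !ffunE /= intz mul0rz. Qed.

Lemma sigma_coords (A : Type) (C : A -> 'I_2 -> 'I_2 -> int) a (first : bool) v :
  gcm (C a) ->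
  coords (sigma C (if first then ord0 else ord_max) a v)
  = refl2 (C a ord0 ord_max) (C a ord_max ord0) first (coords v).
Proof.
case=> Cii _; rewrite /sigma /coords /refl2 big_ord_recl big_ord1.
have -> : lift ord0 ord0 = ord_max :> 'I_2 by apply: val_inj.
by case: first; rewrite !ffunE !ffunMzE !ffunE /= ?intz ?mul0rz ?subr0 Cii; congr pair; ring.
Qed.

Lemma gcm2_offdiag (c : 'I_2 -> 'I_2 -> int) :
  gcm c -> [/\ c ord0 ord_max <= 0, c ord_max ord0 <= 0 &
                (c ord0 ord_max = 0 <-> c ord_max ord0 = 0)].
Proof. by case=> _ [c_le0 c0]; split; [exact: c_le0|exact: c_le0|split; apply: c0]. Qed.

Section StandardRank2.
Variables (A : Type) (rho : 'I_2 -> A -> A) (C : A -> 'I_2 -> 'I_2 -> int)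
  (R : A -> {ffun 'I_2 -> int} -> Prop) (x : A).
Hypotheses (HC : cartan_scheme rho C) (HR : root_system rho C R) (HstC : standard C).

Let a := C x ord0 ord_max.
Let b := C x ord_max ord0.
Let simple (first : bool) : 'I_2 := if first then ord0 else ord_max.
Let s (first : bool) := sigma C (simple first) x.
Let r (first : bool) := rho (simple first).

Let gcm_x : gcm (C x). Proof. by case: HC. Qed.

Let s_involutive first : involutive (s first).
Proof. by apply: sigma_involutive; case: gcm_x. Qed.

Let r_involutive first : involutive (r first).
Proof. by case: HC => _ [rhoK _] c; apply: rhoK. Qed.

Let coords_s first v : coords (s first v) = refl2 a b first (coords v).
Proof. exact: sigma_coords. Qed.

Let root_walk k c v : R c v -> R (walk r k c) (walk s k v).
Proof.
elim: k => //= k IH /IH /(root_sigma HR (simple (~~ odd k))).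
by rewrite /sigma (HstC _ x).
Qed.

Let pm_simple : seq {ffun 'I_2 -> int} :=
  [:: alpha ord0; alpha ord_max; - alpha ord0; - alpha ord_max].

Let root_open_quadrant c v :
  R c v -> v \notin pm_simple -> in_open_quadrant (coords v).
Proof.
move=> Rv notsimple.
have off_axis i z : v <> alpha i *~ z.
  move=> /(root_on_axis HR Rv) [] vE; move: notsimple; rewrite vE;
    by case: (ord2P i) => ->; rewrite !inE eqxx ?orbT.
have v0 : v ord0 <> 0.
  move=> v0; apply: (off_axis ord_max (v ord_max)); apply: coords_inj.
  by rewrite coords_alpha1_mulz /coords v0.
have v1 : v ord_max <> 0.
  move=> v1; apply: (off_axis ord0 (v ord0)); apply: coords_inj.
  by rewrite coords_alpha0_mulz /coords v1.
move: v0 v1; rewrite /in_open_quadrant /=.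
case: (root_sign_coherent HR Rv) => [vge|vle];
  [move: (vge ord0) (vge ord_max)|move: (vle ord0) (vle ord_max)];
  rewrite ?ffunE; set m := v ord0; set n := v ord_max; lia.
Qed.

Let walk_reaches_simple c v :
  R c v -> a * b <= 3 -> has (fun k => walk s k v \in pm_simple) (iota 0 7).
Proof.
move=> Rv le3; apply/negPn/negP => /hasPn notsimple.
have [a_le0 b_le0 ab0] := gcm2_offdiag gcm_x.
apply: (refl2_walk_exits_open_quadrant (p := coords v) a_le0 b_le0 ab0 le3) => k k7. rewrite -(walk_morph _ _ coords_s).
by apply: (root_open_quadrant (root_walk k Rv)); apply: notsimple; rewrite mem_iota.
Qed.

Let finite_of_le3 : a * b <= 3 -> finite_rs R.
Proof.
move=> le3 c.
exists [seq v <- [seq unwalk s k w | k <- iota 0 7, w <- pm_simple] | `[< R c v >]] => v.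
rewrite mem_filter; split=> [Rv|/andP[/asboolP //]].
rewrite asboolT //.
have /hasP [k k7 hit] := walk_reaches_simple Rv le3.
by rewrite -(walkK k s_involutive v); apply: (allpairs_f (unwalk s)).
Qed.

Let le3_of_finite : finite_rs R -> a * b <= 3.
Proof.
move=> fin; rewrite leNgt; apply/negP => gt3.
have [a_lt0 b_lt0] : a < 0 /\ b < 0 by have [] := gcm2_offdiag gcm_x; nia.
have [roots rootsP] := fin x.
have [B rootsB] := exists_ub_seq (fun v : {ffun 'I_2 -> int} => v ord_max) roots.
pose j := `|B|%N.
have Rw : R x (walk s j.*2 (alpha ord_max)).
  by have := root_walk j.*2 (root_simple HR (unwalk r j.*2 x) ord_max); rewrite unwalkK.
have := rootsB _ (proj1 (rootsP _) Rw).
have ab_ge4 : 4 <= a * b by lia.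
have := refl2_walk_unbounded j a_lt0 b_lt0 ab_ge4.
have -> : (0, 1) = coords (alpha ord_max) by rewrite /coords !ffunE.
rewrite -(walk_morph _ _ coords_s) /=; lia.
Qed.

Lemma standard_rank2_finite_rsE : finite_rs R <-> a * b <= 3.
Proof. by split; [apply: le3_of_finite|apply: finite_of_le3]. Qed.

End StandardRank2.

Lemma cartan2_finite_typeE (a b : int) :
  a <= 0 -> b <= 0 -> (a = 0 <-> b = 0) ->
  ((a = 0 /\ b = 0) \/ a * b \in [:: 1; 2; 3]) <-> a * b <= 3.
Proof.
move=> a_le0 b_le0 ab0; rewrite !inE; split=> [[[-> ->] //|]|le3].
  by case/or3P=> /eqP ->.
have [a0|a_neq0] := eqVneq a 0; first by left; split=> //; apply/ab0.
right; have : a * b = 1 \/ a * b = 2 \/ a * b = 3 by nia.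
by case=> [->|[->|->]].
Qed.

Theorem proposition5p2 (A : Type) (x y : A) (hxy : x <> y)
  (hA : forall a : A, a = x \/ a = y)
  (rho : 'I_2 -> A -> A) (C : A -> 'I_2 -> 'I_2 -> int)
  (HC : cartan_scheme rho C)
  (hrho : forall i : 'I_2, rho i x = y /\ rho i y = x)
  (R : A -> {ffun 'I_2 -> int} -> Prop)
  (HR : root_system rho C R) :
  finite_rs R <->
  (standard C /\
   ((C x ord0 ord_max = 0 /\ C x ord_max ord0 = 0) \/
    C x ord0 ord_max * C x ord_max ord0 \in [:: 1; 2; 3])).
Proof.
have Cyx : C y = C x.
  apply: funext => i; apply: funext => j.
  by case: HC => _ [_ Crho]; rewrite -(proj1 (hrho i)) -Crho.
have HstC : standard C by move=> a b; case: (hA a) => ->; case: (hA b) => ->.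
have [a_le0 b_le0 ab0] := gcm2_offdiag (proj1 HC x).
have finite_typeE := cartan2_finite_typeE a_le0 b_le0 ab0.
have finiteE := standard_rank2_finite_rsE x HC HR HstC.
by split=> [/finiteE/finite_typeE|[_ /finite_typeE/finiteE]].
Qed.
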